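(* Let $(b_n)_{n\ge 0}$ and $(p_{2n})_{n\ge 1}$ be sequences of non-negative integers, not all $p_{2n}$ zero, and let $$V(x)=\sum_{n=0}^\infty b_n x^n,\qquad U(x)=\sum_{n=1}^\infty p_{2n}x^n$$ have radii of convergence $x_V$ and $x_U$ respectively, where $0<x_U<x_V\le 1$ and $\lim_{x\to x_V^-}V(x)=\infty$. Let $c>1$, $c\notin\mathbb N$, and assume $$U(x)=U(x_U^-)+U_0(x_U-x)^{c-1}+o\big((x_U-x)^{c-1}\big)\qquad(x\to x_U^-),$$ with $U(x_U^-)=\lim_{x\to x_U^-}U(x)<\infty$ and a constant $U_0\neq 0$. Assume $U(x_U^-)V(x_U)\le1$, and let $w_c\ge1$ be defined by $U(x_U^-)V(w_cx_U)=1$. Let $Z(x,w)=V(wx)/(1-U(x)V(wx))$. Then $Z$ has the scaling form $$Z(x,w)\sim (x_U-x)^{-\theta}\,F\!\left(\frac{w-w_c}{(x_U-x)^{\phi}}\right)\qquad (x,w)\to(x_U^-,w_c^+),$$ i.e. for each fixed $s\ge0$ with $F(s)$ finite, $(x_U-x)^{\theta}Z\big(x,\,w_c+s(x_U-x)^\phi\big)\to F(s)$ as $x\to x_U^-$, where $$\theta=\phi=c-1,\qquad F(s)=\frac{1}{|U_0|-U(x_U^-)^2\,V'(w_cx_U)\,x_U\,s}\qquad\text{if }1<c<2,$$ $$\theta=\phi=1,\qquad F(s)=\frac{1}{U(x_U^-)^2\,V'(w_cx_U)\,[w_c-x_U s]}\qquad\text{if }c>2.$$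
   Context: Poland–Scheraga model of DNA denaturation: $b_n$ counts paths of length $n$, $p_{2n}$ counts marked loops of length $2n$, $w\ge1$ is a Boltzmann factor, and $Z(x,w)$ is the generating function of chains (alternating sequences of paths and loops beginning and ending with a path), with $x$ conjugate to length. $V'$ denotes the derivative of $V$. $A\sim B$ means $A/B\to1$. *)

From Stdlib Require Import Reals.
From Coquelicot Require Import Coquelicot.
Open Scope R_scope.

Definition Vcoef (b : nat -> nat) : nat -> R := fun n => INR (b n).

(* Coefficients of U(x) = sum_{n>=1} p_{2n} x^n; here [p n] stands for p_{2n},
   and the value [p 0] is ignored (coefficient of x^0 is 0). *)
Definition Ucoef (p : nat -> nat) : nat -> R :=
  fun n => match n with O => 0 | S _ => INR (p n) end.

Definition Vfun (b : nat -> nat) (x : R) : R := PSeries (Vcoef b) x.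
Definition Ufun (p : nat -> nat) (x : R) : R := PSeries (Ucoef p) x.

Definition Zfun (b p : nat -> nat) (x w : R) : R :=
  Vfun b (w * x) / (1 - Ufun p x * Vfun b (w * x)).

From Stdlib Require Import Reals Lra.
From Coquelicot Require Import Coquelicot.
Open Scope R_scope.

(* Put t = (xU - x)^phi and W = (w_c + s t) x.  Since U(xU^-) V(w_c xU) = 1,
   1 - U(x) V(W) = -(U(x) - U(xU^-)) V(W) - U(xU^-) (V(W) - V(w_c xU)),
   and W - w_c xU = s t x - w_c (xU - x).  Dividing by t, both terms have
   finite limits as soon as (U(x) - U(xU^-))/t and (xU - x)/t do; this holds
   for phi = c - 1 when c < 2 (the U-term dominates, with limit U0 <= 0
   because U increases to U(xU^-)) and for phi = 1 when c > 2 (the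
   V-term dominates).  Then t Z = V(W) / ((1 - U V(W))/t) converges. *)

Section LimitAlgebra.
Context {T : Type} {F : (T -> Prop) -> Prop} {FF : Filter F}.

Lemma filterlim_Rplus (f g : T -> R) (a b : R) :
  filterlim f F (locally a) -> filterlim g F (locally b) ->
  filterlim (fun x => f x + g x) F (locally (a + b)).
Proof. intros Hf Hg; exact (filterlim_comp_2 _ _ _ Hf Hg (filterlim_plus a b)). Qed.

Lemma filterlim_Rmult (f g : T -> R) (a b : R) :
  filterlim f F (locally a) -> filterlim g F (locally b) ->
  filterlim (fun x => f x * g x) F (locally (a * b)).
Proof. intros Hf Hg; exact (filterlim_comp_2 _ _ _ Hf Hg (filterlim_mult a b)). Qed.

Lemma filterlim_Ropp (f : T -> R) (a : R) :
  filterlim f F (locally a) -> filterlim (fun x => - f x) F (locally (- a)).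
Proof. intros Hf; exact (filterlim_comp _ _ _ _ _ _ _ _ Hf (filterlim_opp a)). Qed.

Lemma filterlim_Rminus (f g : T -> R) (a b : R) :
  filterlim f F (locally a) -> filterlim g F (locally b) ->
  filterlim (fun x => f x - g x) F (locally (a - b)).
Proof. intros Hf Hg; apply filterlim_Rplus; [exact Hf | now apply filterlim_Ropp]. Qed.

Lemma filterlim_Rinv (f : T -> R) (a : R) :
  a <> 0 -> filterlim f F (locally a) -> filterlim (fun x => / f x) F (locally (/ a)).
Proof.
  intros Ha Hf; apply (filterlim_comp _ _ _ _ _ _ _ _ Hf).
  apply (filterlim_Rbar_inv (Finite a)); congruence.
Qed.

Lemma filterlim_eventually_neq (f : T -> R) (l : R) :
  l <> 0 -> filterlim f F (locally l) -> F (fun x => f x <> 0).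
Proof.
  intros Hl Hf; apply (Hf (fun y => y <> 0)).
  exists (mkposreal _ (Rabs_pos_lt l Hl)); intros y Hy ->.
  change (Rabs (0 - l) < Rabs l) in Hy.
  rewrite Rminus_0_l, Rabs_Ropp in Hy; lra.
Qed.

Lemma filterlim_of_quotient (g t : T -> R) (a q : R) :
  filterlim t F (locally 0) -> F (fun x => t x <> 0) ->
  filterlim (fun x => (g x - a) / t x) F (locally q) ->
  filterlim g F (locally a).
Proof.
  intros Ht Ht0 Hq.
  apply (filterlim_ext_loc (fun x => a + t x * ((g x - a) / t x))).
  { refine (filter_imp _ _ _ Ht0); intros x Hx; field; exact Hx. }
  replace (locally a) with (locally (a + 0 * q)) by (f_equal; ring).
  apply filterlim_Rplus; [apply filterlim_const | now apply filterlim_Rmult].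
Qed.

End LimitAlgebra.

(* Caratheodory's characterisation of differentiability. *)
Definition slope (f : R -> R) (a l y : R) : R :=
  if Req_EM_T y a then l else (f y - f a) / (y - a).

Lemma slope_spec (f : R -> R) (a l y : R) : f y = f a + slope f a l y * (y - a).
Proof. unfold slope; destruct (Req_EM_T y a) as [-> | Hne]; [ring | field; lra]. Qed.

Lemma filterlim_slope (f : R -> R) (a l : R) :
  derivable_pt_lim f a l -> filterlim (slope f a l) (locally a) (locally l).
Proof.
  intros Hf P [eps He]; destruct (Hf eps (cond_pos eps)) as [d Hd].
  exists d; intros y Hy; apply He; unfold slope.
  destruct (Req_EM_T y a) as [-> | Hne]; [apply ball_center |].
  change (Rabs ((f y - f a) / (y - a) - l) < eps).
  change (Rabs (y - a) < d) in Hy.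
  replace y with (a + (y - a)) at 1 by ring.
  apply Hd; [lra | exact Hy].
Qed.

Lemma filterlim_comp_quotient {T : Type} {F : (T -> Prop) -> Prop} {FF : Filter F}
    (f : R -> R) (g t : T -> R) (a l q : R) :
  derivable_pt_lim f a l ->
  filterlim t F (locally 0) -> F (fun x => t x <> 0) ->
  filterlim (fun x => (g x - a) / t x) F (locally q) ->
  filterlim (fun x => (f (g x) - f a) / t x) F (locally (l * q)).
Proof.
  intros Hf Ht Ht0 Hq.
  apply (filterlim_ext_loc (fun x => slope f a l (g x) * ((g x - a) / t x))).
  { refine (filter_imp _ _ _ Ht0); intros x Hx.
    rewrite (slope_spec f a l (g x)); field; exact Hx. }
  apply filterlim_Rmult; [| exact Hq].
  apply (filterlim_comp _ _ _ _ _ _ _ _ (filterlim_of_quotient g t a q Ht Ht0 Hq)).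
  now apply filterlim_slope.
Qed.

Section ScalingLimit.
Context {F : (R -> Prop) -> Prop} {FF : Filter F}.
Variables (U V t : R -> R) (xU Ux wc V' L m s : R).
Hypotheses (HxU : filterlim (fun x => x) F (locally xU))
  (HUV : Ux * V (wc * xU) = 1) (HV' : derivable_pt_lim V (wc * xU) V')
  (Ht : filterlim t F (locally 0)) (Ht0 : F (fun x => t x <> 0))
  (HL : filterlim (fun x => (U x - Ux) / t x) F (locally L))
  (Hm : filterlim (fun x => (xU - x) / t x) F (locally m)).

Lemma scaled_argument_quotient :
  filterlim (fun x => ((wc + s * t x) * x - wc * xU) / t x) F
    (locally (s * xU - wc * m)).
Proof.
  apply (filterlim_ext_loc (fun x => s * x - wc * ((xU - x) / t x))).
  { refine (filter_imp _ _ _ Ht0); intros x Hx; field; exact Hx. }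
  apply filterlim_Rminus; apply filterlim_Rmult; try apply filterlim_const; assumption.
Qed.

Lemma scaled_value_quotient :
  filterlim (fun x => (V ((wc + s * t x) * x) - V (wc * xU)) / t x) F
    (locally (V' * (s * xU - wc * m))).
Proof. exact (filterlim_comp_quotient V _ t _ _ _ HV' Ht Ht0 scaled_argument_quotient). Qed.

Lemma scaled_value_limit :
  filterlim (fun x => V ((wc + s * t x) * x)) F (locally (V (wc * xU))).
Proof. exact (filterlim_of_quotient _ _ _ _ Ht Ht0 scaled_value_quotient). Qed.

Lemma scaled_denominator_quotient :
  filterlim (fun x => (1 - U x * V ((wc + s * t x) * x)) / t x) F
    (locally (- L * V (wc * xU) - Ux * (V' * (s * xU - wc * m)))).
Proof.
  apply (filterlim_ext_loc (fun x => - ((U x - Ux) / t x) * V ((wc + s * t x) * x)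
    - Ux * ((V ((wc + s * t x) * x) - V (wc * xU)) / t x))).
  { refine (filter_imp _ _ _ Ht0); intros x Hx.
    rewrite <- HUV; field; exact Hx. }
  apply filterlim_Rminus; apply filterlim_Rmult.
  - now apply filterlim_Ropp.
  - exact scaled_value_limit.
  - apply filterlim_const.
  - exact scaled_value_quotient.
Qed.

Lemma scaling_limit :
  - L - Ux ^ 2 * V' * (s * xU - wc * m) <> 0 ->
  filterlim (fun x => t x * (V ((wc + s * t x) * x) / (1 - U x * V ((wc + s * t x) * x))))
    F (locally (/ (- L - Ux ^ 2 * V' * (s * xU - wc * m)))).
Proof.
  intros Hne.
  assert (HVa : V (wc * xU) <> 0) by (intros E; rewrite E in HUV; lra).
  assert (HUinv : Ux = / V (wc * xU)).
  { apply (Rmult_eq_reg_r (V (wc * xU))); [rewrite Rinv_l; assumption | exact HVa]. }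
  assert (HD := scaled_denominator_quotient).
  assert (HDeq : - L * V (wc * xU) - Ux * (V' * (s * xU - wc * m))
                 = V (wc * xU) * (- L - Ux ^ 2 * V' * (s * xU - wc * m)))
    by (rewrite HUinv; field; exact HVa).
  rewrite HDeq in HD.
  assert (HD0 := Rmult_integral_contrapositive_currified _ _ HVa Hne).
  apply (filterlim_ext_loc (fun x => V ((wc + s * t x) * x)
           * / ((1 - U x * V ((wc + s * t x) * x)) / t x))).
  { refine (filter_imp _ _ _ (filter_and _ _ Ht0 (filterlim_eventually_neq _ _ HD0 HD))).
    intros x [Htx HDx]; field; split; [| exact Htx].
    intros E; apply HDx; rewrite E; unfold Rdiv; ring. }
  replace (/ (- L - Ux ^ 2 * V' * (s * xU - wc * m)))
    with (V (wc * xU) * / (V (wc * xU) * (- L - Ux ^ 2 * V' * (s * xU - wc * m))))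
    by (field; split; assumption).
  apply filterlim_Rmult; [exact scaled_value_limit | now apply filterlim_Rinv].
Qed.

End ScalingLimit.

Lemma at_left_interval (a b : R) : a < b -> at_left b (fun x => a < x < b).
Proof.
  intros Hab; exists (mkposreal (b - a) ltac:(lra)); intros y Hy Hyb.
  change (Rabs (y - b) < b - a) in Hy; apply Rabs_lt_between in Hy; simpl; lra.
Qed.

Lemma filterlim_at_left_id (a : R) : filterlim (fun x => x) (at_left a) (locally a).
Proof. apply (filterlim_filter_le_1 _ (filter_le_within _)); apply filterlim_id. Qed.

Lemma Rpower_neq_0 (x y : R) : Rpower x y <> 0.
Proof. apply Rgt_not_eq, exp_pos. Qed.

Lemma filterlim_Rpower_dist_at_left (a q : R) :
  0 < q -> filterlim (fun x => Rpower (a - x) q) (at_left a) (locally 0).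
Proof.
  intros Hq P [eps He].
  exists (mkposreal _ (exp_pos (/ q * ln eps))); intros y Hy Hya; apply He.
  change (Rabs (y - a) < Rpower eps (/ q)) in Hy.
  change (Rabs (Rpower (a - y) q - 0) < eps).
  rewrite Rminus_0_r, Rabs_pos_eq by (left; apply exp_pos).
  rewrite Rabs_left in Hy by lra.
  rewrite <- (Rpower_1 eps) by apply cond_pos.
  replace 1 with (/ q * q) by (field; lra).
  rewrite <- Rpower_mult; apply Rlt_Rpower_l; lra.
Qed.

Lemma filterlim_dist_div_Rpower_at_left (a q : R) :
  q < 1 -> filterlim (fun x => (a - x) / Rpower (a - x) q) (at_left a) (locally 0).
Proof.
  intros Hq.
  apply (filterlim_ext_loc (fun x => Rpower (a - x) (1 - q))).
  - apply (filter_imp (fun x => a - 1 < x < a)); [intros x Hx | apply at_left_interval; lra].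
    rewrite <- (Rpower_1 (a - x)) at 2 by lra.
    unfold Rdiv; rewrite <- Rpower_Ropp, <- Rpower_plus; f_equal; ring.
  - apply filterlim_Rpower_dist_at_left; lra.
Qed.

Lemma PSeries_le_nonneg (a : nat -> R) (x y : R) :
  (forall n, 0 <= a n) -> 0 <= x <= y -> Rbar_lt (Finite y) (CV_radius a) ->
  PSeries a x <= PSeries a y.
Proof.
  intros Ha Hxy Hy; apply Series_le.
  - intros n; split.
    + apply Rmult_le_pos; [apply Ha | apply pow_le; lra].
    + apply Rmult_le_compat_l; [apply Ha | apply pow_incr; lra].
  - apply (ex_series_ext (fun k => scal (pow_n y k) (a k))).
    + intros n; rewrite pow_n_pow; apply Rmult_comm.
    + apply CV_radius_inside; rewrite Rabs_pos_eq by lra; exact Hy.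
Qed.

Lemma le_at_left_limit (f : R -> R) (x b l : R) :
  x < b -> (forall y, x < y < b -> f x <= f y) ->
  filterlim f (at_left b) (locally l) -> f x <= l.
Proof.
  intros Hxb Hf Hl.
  apply (filterlim_le (F := at_left b) (fun _ => f x) f (f x) l); [| apply filterlim_const | exact Hl].
  exact (filter_imp _ _ Hf (at_left_interval x b Hxb)).
Qed.

Lemma Ufun_le_at_left_limit (p : nat -> nat) (xU Ux x : R) :
  CV_radius (Ucoef p) = Finite xU -> filterlim (Ufun p) (at_left xU) (locally Ux) ->
  0 <= x < xU -> Ufun p x <= Ux.
Proof.
  intros Hr HUx Hx; apply (le_at_left_limit _ x xU); [lra | intros y Hy | exact HUx].
  apply PSeries_le_nonneg; [| lra | rewrite Hr; simpl; lra].
  intros [|n]; [apply Rle_refl | apply pos_INR].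
Qed.

Section LeftExpansion.
Variables (U : R -> R) (xU Ux U0 c : R).
Hypothesis HUasym : filterlim
  (fun x => (U x - Ux - U0 * Rpower (xU - x) (c - 1)) / Rpower (xU - x) (c - 1))
  (at_left xU) (locally 0).

Lemma expansion_leading_quotient :
  filterlim (fun x => (U x - Ux) / Rpower (xU - x) (c - 1)) (at_left xU) (locally U0).
Proof.
  apply (filterlim_ext (fun x =>
    (U x - Ux - U0 * Rpower (xU - x) (c - 1)) / Rpower (xU - x) (c - 1) + U0)).
  { intros x; field; apply Rpower_neq_0. }
  replace (locally U0) with (locally (0 + U0)) by (f_equal; ring).
  apply filterlim_Rplus; [exact HUasym | apply filterlim_const].
Qed.

Lemma expansion_coef_nonpos : at_left xU (fun x => U x <= Ux) -> U0 <= 0.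
Proof.
  intros HU.
  apply (filterlim_le (F := at_left xU)
           (fun x => (U x - Ux) / Rpower (xU - x) (c - 1)) (fun _ => 0) U0 0);
    [| exact expansion_leading_quotient | apply filterlim_const].
  refine (filter_imp _ _ _ HU); intros x Hx.
  apply Rmult_le_0_r; [lra | left; apply Rinv_0_lt_compat, exp_pos].
Qed.

Lemma expansion_linear_quotient :
  2 < c -> filterlim (fun x => (U x - Ux) / Rpower (xU - x) 1) (at_left xU) (locally 0).
Proof.
  intros Hc.
  apply (filterlim_ext (fun x =>
    (U x - Ux) / Rpower (xU - x) (c - 1) * Rpower (xU - x) (c - 2))).
  { intros x; replace (c - 1) with (c - 2 + 1) by ring; rewrite Rpower_plus.
    field; split; apply Rpower_neq_0. }
  replace (locally 0) with (locally (U0 * 0)) by (f_equal; ring).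
  apply filterlim_Rmult;
    [exact expansion_leading_quotient | apply filterlim_Rpower_dist_at_left; lra].
Qed.

End LeftExpansion.

Theorem theorem3
  (b p : nat -> nat) (xU xV c U0 Ux wc : R)
  (* not all p_{2n} (n >= 1) are zero *)
  (Hp : exists n : nat, (1 <= n)%nat /\ p n <> 0%nat)
  (* radii of convergence *)
  (HrV : CV_radius (Vcoef b) = Finite xV)
  (HrU : CV_radius (Ucoef p) = Finite xU)
  (HxU : 0 < xU) (HxUV : xU < xV) (HxV1 : xV <= 1)
  (* V(x) -> infinity as x -> xV^- *)
  (HVinf : filterlim (Vfun b) (at_left xV) (Rbar_locally p_infty))
  (* c > 1, c not a natural number *)
  (Hc : 1 < c) (Hcn : forall n : nat, c <> INR n)
  (* U(xU^-) = Ux finite *)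
  (HUlim : filterlim (Ufun p) (at_left xU) (locally Ux))
  (* U(x) = Ux + U0 (xU-x)^(c-1) + o((xU-x)^(c-1)) as x -> xU^- *)
  (HU0 : U0 <> 0)
  (HUasym : filterlim
     (fun x => (Ufun p x - Ux - U0 * Rpower (xU - x) (c - 1))
               / Rpower (xU - x) (c - 1))
     (at_left xU) (locally 0))
  (* U(xU^-) V(xU) <= 1 *)
  (HUV : Ux * Vfun b xU <= 1)
  (* w_c >= 1 defined by U(xU^-) V(w_c xU) = 1 *)
  (Hwc1 : 1 <= wc) (HwcV : wc * xU < xV) (Hwc : Ux * Vfun b (wc * xU) = 1) :
  (c < 2 ->
    forall s : R, 0 <= s ->
    Rabs U0 - Ux ^ 2 * Derive (Vfun b) (wc * xU) * xU * s <> 0 ->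
    filterlim
      (fun x => Rpower (xU - x) (c - 1)
                * Zfun b p x (wc + s * Rpower (xU - x) (c - 1)))
      (at_left xU)
      (locally (1 / (Rabs U0 - Ux ^ 2 * Derive (Vfun b) (wc * xU) * xU * s))))
  /\
  (2 < c ->
    forall s : R, 0 <= s ->
    Ux ^ 2 * Derive (Vfun b) (wc * xU) * (wc - xU * s) <> 0 ->
    filterlim
      (fun x => Rpower (xU - x) 1 * Zfun b p x (wc + s * Rpower (xU - x) 1))
      (at_left xU)
      (locally (1 / (Ux ^ 2 * Derive (Vfun b) (wc * xU) * (wc - xU * s))))).
Proof.
  (* Only the differentiability of V at 0 <= w_c xU < x_V and the expansion
     of U at xU matter: Hp, HxUV, HxV1, HVinf, Hcn, HU0 and HUV are unused. *)
  assert (HV' : derivable_pt_lim (Vfun b) (wc * xU) (Derive (Vfun b) (wc * xU))).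
  { apply is_derive_Reals, Derive_correct, ex_derive_PSeries.
    rewrite HrV; simpl; rewrite Rabs_pos_eq; nra. }
  assert (Ht0 : forall q, at_left xU (fun x => Rpower (xU - x) q <> 0))
    by (intros q; apply filter_forall; intros x; apply Rpower_neq_0).
  split; intros Hc2 s Hs Hne; unfold Zfun.
  - assert (HU0neg : U0 <= 0).
    { apply (expansion_coef_nonpos (Ufun p) xU Ux U0 c HUasym).
      refine (filter_imp _ _ _ (at_left_interval 0 xU HxU)); intros x Hx.
      apply (Ufun_le_at_left_limit p xU); [exact HrU | exact HUlim | lra]. }
    rewrite Rabs_left1 in * by exact HU0neg.
    replace (1 / _) with (/ (- U0 - Ux ^ 2 * Derive (Vfun b) (wc * xU) * (s * xU - wc * 0)))
      by (unfold Rdiv; rewrite Rmult_1_l; f_equal; ring).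
    apply scaling_limit; [apply filterlim_at_left_id | exact Hwc | exact HV'
      | apply filterlim_Rpower_dist_at_left; lra | apply Ht0 | | |].
    + exact (expansion_leading_quotient _ _ _ _ _ HUasym).
    + apply filterlim_dist_div_Rpower_at_left; lra.
    + replace (s * xU - wc * 0) with (xU * s) by ring; rewrite <- Rmult_assoc; exact Hne.
  - replace (1 / _) with (/ (- 0 - Ux ^ 2 * Derive (Vfun b) (wc * xU) * (s * xU - wc * 1)))
      by (unfold Rdiv; rewrite Rmult_1_l; f_equal; ring).
    apply scaling_limit; [apply filterlim_at_left_id | exact Hwc | exact HV'
      | apply filterlim_Rpower_dist_at_left; lra | apply Ht0 | | |].
    + exact (expansion_linear_quotient _ _ _ U0 _ HUasym Hc2).
    + apply (filterlim_ext_loc (fun _ => 1)); [| apply filterlim_const].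
      refine (filter_imp _ _ _ (at_left_interval 0 xU HxU)); intros x Hx.
      rewrite Rpower_1 by lra; field; lra.
    + contradict Hne; rewrite <- Hne; ring.
Qed.
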